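(* Let $t_1,c_1>0$ and let $f:[0,t_1]\to\mathbb R^2$ be continuous with $f(0)=0$. Suppose $(g_1,M_1)$ and $(g_2,M_2)$ are two solutions of the deterministic Skorokhod problem $g_i(t)=g_i(0)+f(t)+RM_i(t)$, $t\in[0,t_1]$, with $g_1(0),g_2(0)\ne0$, $|g_1(0)-g_2(0)|\le c_1/4$, and $\sup_{s\le t_*\wedge t_1}|g_1(s)-g_2(s)|\ge c_1$, where $t_*=\inf\{t>0:g_2(t)=0\}$. Then $$t_*\ge\inf\{y:\operatorname{Osc}(f,t_1,y)\ge c_1/(4\chi_1)\}.$$
   Context: $a_1>0>a_2$ with $|a_1a_2|>1$ (standing assumptions), $R=\begin{pmatrix}1&-a_1\\-a_2&1\end{pmatrix}$, $D$ the closed first quadrant, $\Gamma_d$ the nonnegative $x$-axis, $\Gamma_u$ the nonnegative $y$-axis. A solution $(g,M)$ of the deterministic Skorokhod problem with initial point $x_0\in D$ and driving function $f$ consists of continuous $g:[0,t_1]\to D$ and $M=(M^1,M^2)$ with continuous non-decreasing components, $M(0)=0$, $M^1$ increasing only when $g\in\Gamma_d$, $M^2$ increasing only when $g\in\Gamma_u$, with $g(t)=x_0+f(t)+RM(t)$. $\operatorname{Osc}(f,t_1,y)=\sup_{0\le s_1\le s_2\le s_1+y\le t_1}|f(s_2)-f(s_1)|$. $\chi_1$ is a constant depending only on $a_1,a_2$ such that for all such $t_0$, $f$ (with $f(0)=0$), $x_0$ and every solution $(g,M)$ on $[0,t_0]$, $\sup_{u_1,u_2\in[s,t]}(|g(u_2)-g(u_1)|+|M(u_2)-M(u_1)|)\le\chi_1\sup_{u_1,u_2\in[s,t]}|f(u_2)-f(u_1)|$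 for all $0\le s\le t\le t_0$ (such a constant exists since $R$ is completely-$S$). *)

From HB Require Import structures.
From mathcomp Require Import all_boot all_order all_algebra.
From mathcomp Require Import all_classical all_reals all_analysis.
Set Implicit Arguments. Unset Strict Implicit. Unset Printing Implicit Defensive.
Import Order.TTheory GRing.Theory Num.Theory.
Import numFieldNormedType.Exports.
Local Open Scope classical_set_scope.
Local Open Scope ring_scope.

Section Defs.
Variable R : realType.

Definition nrm2 (p : R * R) : R := Num.sqrt (p.1 ^+ 2 + p.2 ^+ 2).
Definition padd (p q : R * R) : R * R := (p.1 + q.1, p.2 + q.2).
Definition psub (p q : R * R) : R * R := (p.1 - q.1, p.2 - q.2).

(* D = closed first quadrant; Gamma_d = nonneg x-axis; Gamma_u = nonneg y-axis *)
Definition inD (p : R * R) : Prop := 0 <= p.1 /\ 0 <= p.2.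
Definition on_Gd (p : R * R) : Prop := 0 <= p.1 /\ p.2 = 0.
Definition on_Gu (p : R * R) : Prop := p.1 = 0 /\ 0 <= p.2.

(* R m for R = [[1, -a1], [-a2, 1]] *)
Definition Rmul (a1 a2 : R) (m : R * R) : R * R :=
  (m.1 - a1 * m.2, - a2 * m.1 + m.2).

Definition SkorokhodSol (a1 a2 t0 : R) (x0 : R * R) (f g M : R -> R * R) : Prop :=
  inD x0 /\
  {within `[0, t0], continuous g} /\
  (forall t, 0 <= t <= t0 -> inD (g t)) /\
  {within `[0, t0], continuous (fun t => (M t).1)} /\
  {within `[0, t0], continuous (fun t => (M t).2)} /\
  M 0 = (0, 0) /\
  (forall s t, 0 <= s -> s <= t -> t <= t0 ->
     (M s).1 <= (M t).1 /\ (M s).2 <= (M t).2) /\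
  (forall s t, 0 <= s -> s <= t -> t <= t0 ->
     (forall u, s <= u <= t -> ~ on_Gd (g u)) -> (M s).1 = (M t).1) /\
  (forall s t, 0 <= s -> s <= t -> t <= t0 ->
     (forall u, s <= u <= t -> ~ on_Gu (g u)) -> (M s).2 = (M t).2) /\
  (forall t, 0 <= t <= t0 -> g t = padd (padd x0 (f t)) (Rmul a1 a2 (M t))).

Definition Osc (f : R -> R * R) (t1 y : R) : \bar R :=
  ereal_sup ((fun s : R * R => (nrm2 (psub (f s.2) (f s.1)))%:E) @`
    [set s : R * R | 0 <= s.1 /\ s.1 <= s.2 /\ s.2 <= s.1 + y /\ s.1 + y <= t1]).

Definition chi1_prop (a1 a2 chi : R) : Prop :=
  forall (t0 : R) (f : R -> R * R) (x0 : R * R) (g M : R -> R * R),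
    0 <= t0 -> {within `[0, t0], continuous f} -> f 0 = (0, 0) -> inD x0 ->
    SkorokhodSol a1 a2 t0 x0 f g M ->
    forall s t, 0 <= s -> s <= t -> t <= t0 ->
      (ereal_sup ((fun u : R * R =>
          (nrm2 (psub (g u.2) (g u.1)) + nrm2 (psub (M u.2) (M u.1)))%:E) @`
        [set u : R * R | ((s <= u.1 <= t) /\ (s <= u.2 <= t))%R])
      <= chi%:E * ereal_sup ((fun u : R * R => (nrm2 (psub (f u.2) (f u.1)))%:E) @`
        [set u : R * R | ((s <= u.1 <= t) /\ (s <= u.2 <= t))%R]))%E.

(* t_* = inf {t > 0 : g2(t) = 0} (g2 defined on [0,t1]); +oo if no such t *)
Definition tstar (g2 : R -> R * R) (t1 : R) : \bar R :=
  ereal_inf ((fun t : R => t%:E) @` [set t : R | 0 < t /\ t <= t1 /\ g2 t = (0, 0)]).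

End Defs.

From HB Require Import structures.
From mathcomp Require Import all_boot all_order all_algebra.
From mathcomp Require Import all_classical all_reals all_analysis.
From mathcomp Require Import ring lra.
Import Order.TTheory GRing.Theory Num.Theory.
Import numFieldNormedType.Exports.
Local Open Scope classical_set_scope.
Local Open Scope ring_scope.

(* If the threshold time exceeded [t_*], every increment of [f] before
   [min t_* t1] would be below [c1 / (4 chi1)], so by the Lipschitz property of
   the Skorokhod map each [g_i] would stay within [c1 / 4] of [g_i 0] up to that
   time; the triangle inequality then keeps [|g1 - g2|] below [3 c1 / 4 < c1]. *)

Section EuclideanPlane.
Context {R : realType}.
Implicit Types p q r : R * R.

Lemma nrm2_ge0 p : 0 <= nrm2 p.
Proof. exact: sqrtr_ge0. Qed.

Lemma nrm2_psubC p q : nrm2 (psub p q) = nrm2 (psub q p).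
Proof. by rewrite /nrm2 /psub /=; congr Num.sqrt; ring. Qed.

Lemma cauchy_schwarz2 (x1 x2 y1 y2 : R) :
  x1 * y1 + x2 * y2 <=
    Num.sqrt (x1 ^+ 2 + x2 ^+ 2) * Num.sqrt (y1 ^+ 2 + y2 ^+ 2).
Proof.
have sumsq_ge0 (u v : R) : 0 <= u ^+ 2 + v ^+ 2 by rewrite addr_ge0 ?sqr_ge0.
apply: le_trans (ler_norm _) _.
rewrite -sqrtr_sqr -sqrtrM // ler_sqrt ?mulr_ge0 // -subr_ge0.
have -> : (x1 ^+ 2 + x2 ^+ 2) * (y1 ^+ 2 + y2 ^+ 2) - (x1 * y1 + x2 * y2) ^+ 2
    = (x1 * y2 - x2 * y1) ^+ 2 by ring.
exact: sqr_ge0.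
Qed.

Lemma nrm2_psub_triangle p q r :
  nrm2 (psub p r) <= nrm2 (psub p q) + nrm2 (psub q r).
Proof.
rewrite /nrm2 /psub /=.
set x1 := p.1 - q.1; set x2 := p.2 - q.2; set y1 := q.1 - r.1; set y2 := q.2 - r.2.
have -> : p.1 - r.1 = x1 + y1 by rewrite /x1 /y1; ring.
have -> : p.2 - r.2 = x2 + y2 by rewrite /x2 /y2; ring.
have := cauchy_schwarz2 x1 x2 y1 y2.
set a := Num.sqrt (x1 ^+ 2 + x2 ^+ 2); set b := Num.sqrt (y1 ^+ 2 + y2 ^+ 2).
move=> cs.
have a_ge0 : 0 <= a by exact: sqrtr_ge0.
have b_ge0 : 0 <= b by exact: sqrtr_ge0.
have a2 : a ^+ 2 = x1 ^+ 2 + x2 ^+ 2 by rewrite sqr_sqrtr // addr_ge0 ?sqr_ge0.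
have b2 : b ^+ 2 = y1 ^+ 2 + y2 ^+ 2 by rewrite sqr_sqrtr // addr_ge0 ?sqr_ge0.
rewrite -[a + b]ger0_norm ?addr_ge0 // -sqrtr_sqr ler_sqrt ?sqr_ge0 //.
nra.
Qed.

End EuclideanPlane.

Section Oscillation.
Context {R : realType}.

Lemma nrm2_increment_le_Osc (f : R -> R * R) (t1 s1 s2 : R) :
  0 <= s1 -> s1 <= s2 -> s2 <= t1 ->
  ((nrm2 (psub (f s2) (f s1)))%:E <= Osc f t1 (s2 - s1))%E.
Proof.
move=> s1_ge0 s12 s2_le.
by apply: ereal_sup_ubound; exists (s1, s2); rewrite //= addrC subrK.
Qed.

Lemma increment_lt_below_Osc_threshold (f : R -> R * R) (t1 e s u1 u2 : R) :
  (s%:E < ereal_inf ((fun y : R => y%:E) @` [set y | (e%:E <= Osc f t1 y)%E]))%E ->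
  s <= t1 -> 0 <= u1 <= s -> 0 <= u2 <= s ->
  nrm2 (psub (f u2) (f u1)) < e.
Proof.
move=> s_lt s_le.
wlog u12 : u1 u2 / u1 <= u2 => [hwlog hu1 hu2|/andP[u1_ge0 _] /andP[_ u2_le]].
  case: (lerP u1 u2) => [|/ltW] u12; first exact: hwlog.
  by rewrite nrm2_psubC; apply: hwlog.
have Osc_lt : (Osc f t1 (u2 - u1) < e%:E)%E.
  rewrite ltNge; apply/negP => e_le.
  have : (ereal_inf ((fun y : R => y%:E) @` [set y | (e%:E <= Osc f t1 y)%E])
          <= s%:E)%E.
    apply: le_trans (ereal_inf_lbound _) _; first by exists (u2 - u1).
    by rewrite lee_fin; lra.
  by rewrite leNgt s_lt.
rewrite -lte_fin; apply: le_lt_trans Osc_lt.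
by apply: nrm2_increment_le_Osc => //; apply: le_trans s_le.
Qed.

End Oscillation.

Lemma SkorokhodSol_displacement_le (R : realType) (a1 a2 chi t0 e s : R)
  (f g M : R -> R * R) :
  chi1_prop a1 a2 chi -> 0 <= chi ->
  {within `[0, t0], continuous f} -> f 0 = (0, 0) ->
  SkorokhodSol a1 a2 t0 (g 0) f g M -> 0 <= s <= t0 ->
  (forall u1 u2, 0 <= u1 <= s -> 0 <= u2 <= s -> nrm2 (psub (f u2) (f u1)) <= e) ->
  nrm2 (psub (g s) (g 0)) <= chi * e.
Proof.
move=> chiP chi_ge0 f_cont f0 sol /andP[s_ge0 s_le] f_incr.
have := chiP t0 f (g 0) g M (le_trans s_ge0 s_le) f_cont f0 sol.1 sol
  0 s (le_refl _) s_ge0 s_le.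
set osc_gM := ereal_sup _; set osc_f := ereal_sup _ => Lipschitz.
have gM_le : ((nrm2 (psub (g s) (g 0)) + nrm2 (psub (M s) (M 0)))%:E
              <= osc_gM)%E.
  by apply: ereal_sup_ubound; exists (0, s) => //=; rewrite le_refl s_ge0 le_refl.
have f_le : (osc_f <= e%:E)%E.
  by apply: ge_ereal_sup => _ [[u1 u2] /= [hu1 hu2] <-]; rewrite lee_fin f_incr.
have : ((nrm2 (psub (g s) (g 0)) + nrm2 (psub (M s) (M 0)))%:E
          <= (chi * e)%:E)%E.
  apply: le_trans gM_le (le_trans Lipschitz _).
  by rewrite EFinM lee_wpmul2l ?lee_fin.
rewrite lee_fin; have := nrm2_ge0 (psub (M s) (M 0)); lra.
Qed.

Theorem lemma9p4 (R : realType) (a1 a2 chi1 t1 c1 : R)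
  (f g1 g2 M1 M2 : R -> R * R) :
  0 < a1 -> a2 < 0 -> 1 < `|a1 * a2| ->
  0 < chi1 -> chi1_prop a1 a2 chi1 ->
  0 < t1 -> 0 < c1 ->
  {within `[0, t1], continuous f} -> f 0 = (0, 0) ->
  SkorokhodSol a1 a2 t1 (g1 0) f g1 M1 ->
  SkorokhodSol a1 a2 t1 (g2 0) f g2 M2 ->
  g1 0 <> (0, 0) -> g2 0 <> (0, 0) ->
  nrm2 (psub (g1 0) (g2 0)) <= c1 / 4 ->
  (c1%:E <= ereal_sup ((fun s : R => (nrm2 (psub (g1 s) (g2 s)))%:E) @`
      [set s : R | (0 <= s)%R /\ (s%:E <= Order.min (tstar g2 t1) t1%:E)%E]))%E ->
  (ereal_inf ((fun y : R => y%:E) @`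
      [set y : R | ((c1 / (4 * chi1))%:E <= Osc f t1 y)%E]) <= tstar g2 t1)%E.
Proof.
move=> _ _ _ chi_gt0 chiP _ c1_gt0 f_cont f0 sol1 sol2 _ _ close0 far.
rewrite leNgt; apply/negP => tstar_lt.
have stays_close g M s : SkorokhodSol a1 a2 t1 (g 0) f g M -> 0 <= s ->
    (s%:E <= Order.min (tstar g2 t1) t1%:E)%E -> nrm2 (psub (g s) (g 0)) <= c1 / 4.
  rewrite le_min lee_fin => sol s_ge0 /andP[s_le_tstar s_le_t1].
  have -> : c1 / 4 = chi1 * (c1 / (4 * chi1)) by field; rewrite gt_eqF.
  apply: SkorokhodSol_displacement_le chiP (ltW chi_gt0) f_cont f0 sol _ _.
    by rewrite s_ge0.
  move=> u1 u2 hu1 hu2; apply: ltW.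
  exact: increment_lt_below_Osc_threshold (le_lt_trans s_le_tstar tstar_lt) _ _ _.
have : (ereal_sup ((fun s : R => (nrm2 (psub (g1 s) (g2 s)))%:E) @`
      [set s : R | (0 <= s)%R /\ (s%:E <= Order.min (tstar g2 t1) t1%:E)%E])
        <= (3 * c1 / 4)%:E)%E.
  apply: ge_ereal_sup => _ [s [s_ge0 s_le] <-]; rewrite lee_fin.
  have close1 := stays_close g1 M1 s sol1 s_ge0 s_le.
  have close2 := stays_close g2 M2 s sol2 s_ge0 s_le.
  have tri1 := nrm2_psub_triangle (g1 s) (g1 0) (g2 s).
  have tri2 := nrm2_psub_triangle (g1 0) (g2 0) (g2 s).
  rewrite (nrm2_psubC (g2 0)) in tri2; lra.
move/(le_trans far); rewrite lee_fin => c1_le.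
lra.
Qed.
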